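(* Let $G$ be a graph, $k\in\mathbb N$, and let $\mathcal F$ be a set of finite stars in $\vec S_k(G)$ all of which have finite interior. Let $\sigma\subseteq\vec S_k(G)$ be a star of left-tight separations, and let $X\subseteq\mathrm{int}(\sigma)$ with $|X|<k$. Suppose that either $X$ is a critical vertex set of $\mathrm{torso}(\sigma)$, or infinitely many separations $(A,B)\in\sigma$ satisfy $A\cap B=X$. Then there is a non-principal $\mathcal F$-tangle $\tau$ of $S_k(G)$ with $\sigma\subseteq\tau$.
   Context: Graphs may be infinite. A separation of $G$ is a set $\{A,B\}$ with $A,B\subseteq V(G)$, $A\cup B=V(G)$ and no edge of $G$ between $A\setminus B$ and $B\setminus A$; its order is $|A\cap B|$. $S_k(G)$ is the set of separations of order $<k$ and $\vec S_k(G)$ the set of their orientations $(A,B)$, $(B,A)$. Order: $(A,B)\le(C,D)$ iff $A\subseteq C$ and $B\supseteq D$. $(A,B)$ is left-tight if some component of $G[A\setminus B]$ has neighbourhood in $G$ equal to $A\cap B$. An orientation of $S_k(G)$ is a set containing exactly one orientation of each element; consistent if there are no distinct $\{A,B\},\{C,D\}\in S_k(G)$ with $(A,B)<(C,D)$, $(B,A)\in O$, $(C,D)\in O$; principal if for every set $Y$ of fewer than $k$ vertices it contains $(V(G)\setminus V(K),V(K)\cup Y)$ for some component $K$ of $G-Y$, and non-principal otherwise. A star is a set $\sigma$ of oriented finite-order separations, not containing $(V(G),V(G))$, with $(A,B)\le(D,C)$ for distinct $(A,B),(C,D)\in\sigma$; its interior is $\mathrm{int}(\sigma)=\bigcap_{(A,B)\in\sigma}B$;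 $\mathrm{torso}(\sigma)$ is obtained from $G[\mathrm{int}(\sigma)]$ by adding an edge $uv$ whenever distinct $u,v\in\mathrm{int}(\sigma)$ lie together in $A\cap B$ for some $(A,B)\in\sigma$. An $\mathcal F$-tangle of $S_k(G)$ is a consistent orientation of $S_k(G)$ having no element of $\mathcal F$ as a subset. A critical vertex set of a graph $H$ is a finite $X\subseteq V(H)$ such that infinitely many components $K$ of $H-X$ satisfy $N_H(K)=X$. *)

From Stdlib Require Import List.
Set Implicit Arguments.

Section Defs.
Variable V : Type.

Definition vset := V -> Prop.
Definition osep := (vset * vset)%type.

Definition finite_set (T : Type) (P : T -> Prop) : Prop :=
  exists l : list T, forall x, P x -> In x l.
Definition infinite_set (T : Type) (P : T -> Prop) : Prop := ~ finite_set P.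
Definition card_lt (P : vset) (k : nat) : Prop :=
  exists l : list V, NoDup l /\ (forall x, P x <-> In x l) /\ length l < k.

Definition sinter (A B : vset) : vset := fun v => A v /\ B v.
Definition subset (A B : vset) : Prop := forall v, A v -> B v.

Inductive reach (R : V -> V -> Prop) (S : vset) : V -> V -> Prop :=
| reach_refl v : S v -> reach R S v v
| reach_step u v w : reach R S u v -> R v w -> S w -> reach R S u w.

Definition is_comp (R : V -> V -> Prop) (S : vset) (K : vset) : Prop :=
  exists v, S v /\ K = reach R S v.

Definition nbh (R : V -> V -> Prop) (P : vset) (K : vset) : vset :=
  fun v => P v /\ ~ K v /\ exists u, K u /\ R u v.

Definition setT : vset := fun _ => True.

Variable E : V -> V -> Prop.

Definition is_sep (A B : vset) : Prop :=
  (forall v, A v \/ B v) /\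
  (forall u w, E u w -> A u -> ~ B u -> B w -> ~ A w -> False).

Definition in_Sk (k : nat) (p : osep) : Prop :=
  is_sep (fst p) (snd p) /\ card_lt (sinter (fst p) (snd p)) k.

Definition osep_le (p q : osep) : Prop :=
  subset (fst p) (fst q) /\ subset (snd q) (snd p).

Definition flip (p : osep) : osep := (snd p, fst p).

Definition left_tight (p : osep) : Prop :=
  exists K, is_comp E (fun v => fst p v /\ ~ snd p v) K /\
    (forall v, nbh E setT K v <-> sinter (fst p) (snd p) v).

Definition orientation (k : nat) (O : osep -> Prop) : Prop :=
  (forall p, O p -> in_Sk k p) /\
  (forall p, in_Sk k p -> O p \/ O (flip p)) /\
  (forall p, O p -> O (flip p) -> p = flip p).

Definition same_unoriented (p q : osep) : Prop := p = q \/ p = flip q.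

Definition consistent (k : nat) (O : osep -> Prop) : Prop :=
  ~ exists p q, in_Sk k p /\ in_Sk k q /\ ~ same_unoriented p q /\
      osep_le p q /\ p <> q /\ O (flip p) /\ O q.

Definition principal (k : nat) (O : osep -> Prop) : Prop :=
  forall Y : vset, card_lt Y k ->
    exists K, is_comp E (fun v => ~ Y v) K /\
      O (fun v => ~ K v, fun v => K v \/ Y v).

Definition fullsep : osep := (setT, setT).

Definition is_star (s : osep -> Prop) : Prop :=
  (forall p, s p -> is_sep (fst p) (snd p) /\
                    finite_set (sinter (fst p) (snd p))) /\
  ~ s fullsep /\
  (forall p q, s p -> s q -> p <> q -> osep_le p (flip q)).

Definition interior (s : osep -> Prop) : vset :=
  fun v => forall p, s p -> snd p v.

Definition torso_adj (s : osep -> Prop) (u v : V) : Prop :=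
  interior s u /\ interior s v /\ u <> v /\
  (E u v \/ exists p, s p /\ sinter (fst p) (snd p) u /\
                             sinter (fst p) (snd p) v).

Definition critical (R : V -> V -> Prop) (P : vset) (X : vset) : Prop :=
  finite_set X /\ subset X P /\
  infinite_set (fun K => is_comp R (fun v => P v /\ ~ X v) K /\
                         forall v, nbh R P K v <-> X v).

Definition F_tangle (k : nat) (F : (osep -> Prop) -> Prop) (O : osep -> Prop)
  : Prop :=
  orientation k O /\ consistent k O /\
  (forall s, F s -> ~ (forall p, s p -> O p)).

End Defs.

(* Both hypotheses provide an infinite family of disjoint nonempty vertex sets
   K_i (the components of torso(σ) - X attached exactly at X, resp. the sets
   A \ B of the separations (A,B) ∈ σ with A ∩ B = X) such that every
   separation of σ has all but finitely many K_i inside B \ A, while no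
   component of G - X meets two of them. An ultrafilter U on V containing every
   set that contains almost all K_i is non-principal, and orienting each (A,B)
   of order < k towards B iff B \ A ∈ U gives a consistent orientation
   containing σ and no star with finite interior. It is not principal: the
   component of G - X it would have to point to meets at most one K_i, so its
   complement is in U. *)
From Stdlib Require Import List Classical FunctionalExtensionality PropExtensionality.
From mathcomp Require filter.
Set Implicit Arguments.
Unset Strict Implicit.

Section Reach.
Variables (V : Type) (R : V -> V -> Prop) (S : vset V).

Lemma reach_ends u w : reach R S u w -> S u /\ S w.
Proof. induction 1; intuition. Qed.

Lemma reach_trans u v w : reach R S u v -> reach R S v w -> reach R S u w.
Proof.
  intros Huv Hvw; induction Hvw as [|a b c _ IH Rbc Sc]; auto.
  apply reach_step with b; auto.
Qed.

Lemma reach_invariant (P : vset V) :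
  (forall v w, P v -> R v w -> S w -> P w) ->
  forall u w, reach R S u w -> P u -> P w.
Proof. intros HP u w H; induction H; eauto. Qed.

Lemma comp_sub K v : is_comp R S K -> K v -> S v.
Proof. intros [a [_ ->]] Hav; exact (proj2 (reach_ends Hav)). Qed.

Lemma comp_nonempty K : is_comp R S K -> exists v, K v.
Proof. intros [a [Sa ->]]; exists a; now constructor. Qed.

Lemma comp_closed K w z : is_comp R S K -> K w -> R w z -> S z -> K z.
Proof. intros [a [_ ->]] Haw Rwz Sz; now apply reach_step with w. Qed.

Hypothesis R_sym : forall u v, R u v -> R v u.

Lemma reach_sym u w : reach R S u w -> reach R S w u.
Proof.
  induction 1 as [v Sv|u v w Huv IH Rvw Sw]; [now constructor|].
  apply reach_trans with v; auto.
  eapply reach_step; [apply reach_refl; exact Sw|apply R_sym; exact Rvw|].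
  exact (proj2 (reach_ends Huv)).
Qed.

Lemma comp_reach K x y : is_comp R S K -> K x -> K y -> reach R S x y.
Proof.
  intros [a [_ ->]] Hax Hay; apply reach_trans with a; auto.
  now apply reach_sym.
Qed.

Lemma comp_eq K L v : is_comp R S K -> is_comp R S L -> K v -> L v -> K = L.
Proof.
  intros CK CL Kv Lv; destruct CK as [a [Sa ->]], CL as [b [Sb ->]].
  assert (Rab : reach R S a b) by (apply reach_trans with v; auto; now apply reach_sym).
  apply functional_extensionality; intro y; apply propositional_extensionality.
  split; intro H.
  - apply reach_trans with a; auto; now apply reach_sym.
  - now apply reach_trans with b.
Qed.
End Reach.

Lemma card_lt_finite V (P : vset V) k : card_lt P k -> finite_set P.
Proof. intros [l [_ [H _]]]; exists l; intros x Px; now apply H. Qed.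

Definition strict_side V (p : osep V) : vset V := fun v => snd p v /\ ~ fst p v.

Section Separations.
Variables (V : Type) (E : V -> V -> Prop).
Hypothesis E_sym : forall u v, E u v -> E v u.

Lemma in_Sk_flip k (p : osep V) : in_Sk E k p -> in_Sk E k (flip p).
Proof.
  destruct p as [A B]; unfold in_Sk, is_sep, flip; simpl.
  intros [[Hcov Hedge] [l [Hnd [Hl Hk]]]]; split; [split|].
  - intro v; destruct (Hcov v); auto.
  - intros u w Euw Bu nAu Aw nBw; exact (Hedge w u (E_sym Euw) Aw nBw Bu nAu).
  - exists l; split; [exact Hnd|split; [|exact Hk]].
    intro v; rewrite <- Hl; unfold sinter; tauto.
Qed.

Lemma sep_edge_left (A B : vset V) u w :
  is_sep E A B -> E u w -> A u -> ~ B u -> A w.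
Proof.
  intros [Hcov Hedge] Euw Au nBu; apply NNPP; intro nAw.
  destruct (Hcov w) as [|Bw]; [tauto|exact (Hedge u w Euw Au nBu Bw nAw)].
Qed.

Lemma strict_left_closed (p : osep V) (S : vset V) u w :
  is_sep E (fst p) (snd p) -> (forall v, S v -> ~ sinter (fst p) (snd p) v) ->
  reach E S u w -> strict_side (flip p) u -> strict_side (flip p) w.
Proof.
  intros Hsep HS; apply reach_invariant; intros b c [Ab nBb] Ebc Sc.
  assert (Ac : fst p c) by exact (sep_edge_left Hsep Ebc Ab nBb).
  split; [exact Ac|intro Bc; exact (HS c Sc (conj Ac Bc))].
Qed.

Lemma left_tight_nonempty (p : osep V) :
  left_tight E p -> exists v, strict_side (flip p) v.
Proof.
  intros [K [CK _]]; destruct (comp_nonempty CK) as [v Kv].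
  exists v; exact (comp_sub CK Kv).
Qed.

Variable s : osep V -> Prop.
Hypothesis s_star : is_star E s.

Lemma star_strict_side p q :
  s p -> s q -> p <> q -> subset (strict_side (flip q)) (strict_side p).
Proof.
  intros sp sq npq v [Aq nBq].
  destruct s_star as [_ [_ Hle]]; destruct (Hle q p sq sp (not_eq_sym npq)) as [HAq HAp].
  split; [now apply HAq|intro Ap; exact (nBq (HAp v Ap))].
Qed.

Lemma star_strict_sides_disjoint p q v :
  s p -> s q -> strict_side (flip p) v -> strict_side (flip q) v -> p = q.
Proof.
  intros sp sq Hp Hq; apply NNPP; intro npq.
  exact (proj2 (star_strict_side sp sq npq Hq) (proj1 Hp)).
Qed.

Lemma star_separator_interior p v :
  s p -> sinter (fst p) (snd p) v -> interior s v.
Proof.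
  intros sp [Av Bv] q sq; destruct (classic (p = q)) as [<-|npq]; auto.
  destruct s_star as [_ [_ Hle]]; exact (proj1 (Hle p q sp sq npq) v Av).
Qed.
End Separations.

Record ultrafilter (T : Type) (U : (T -> Prop) -> Prop) : Prop := {
  uf_and : forall P Q, U P -> U Q -> U (fun x => P x /\ Q x);
  uf_mono : forall P Q : T -> Prop, (forall x, P x -> Q x) -> U P -> U Q;
  uf_nonempty : forall P, U P -> exists x, P x;
  uf_dichotomy : forall P, U P \/ U (fun x => ~ P x) }.

Lemma ultrafilter_extends (T : Type) (Fl : (T -> Prop) -> Prop)
  (Fl_true : Fl (fun _ => True))
  (Fl_and : forall P Q, Fl P -> Fl Q -> Fl (fun x => P x /\ Q x))
  (Fl_mono : forall P Q : T -> Prop, (forall x, P x -> Q x) -> Fl P -> Fl Q)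
  (Fl_nonempty : forall P, Fl P -> exists x, P x) :
  exists U, ultrafilter U /\ forall P, Fl P -> U P.
Proof.
  assert (Fl_proper : filter.ProperFilter Fl).
  { apply (filter.Build_ProperFilter_ex Fl_nonempty).
    constructor; [exact Fl_true | intros P Q; apply Fl_and | exact Fl_mono]. }
  destruct (filter.ultraFilterLemma Fl_proper) as [U [U_ultra Fl_U]].
  exists U; split; [constructor | exact Fl_U].
  - intros P Q; apply filter.filterI.
  - intros P Q; apply filter.filterS.
  - intros P; apply filter.filter_ex.
  - intros P; apply (filter.in_ultra_setVsetC P U_ultra).
Qed.

Section UltrafilterFacts.
Variables (T : Type) (U : (T -> Prop) -> Prop).
Hypothesis U_ultra : ultrafilter U.

Lemma uf_full : U (fun _ => True).
Proof.
  destruct (uf_dichotomy U_ultra (fun _ => True)) as [H|H]; auto.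
  eapply (uf_mono U_ultra); [|exact H]; auto.
Qed.

Lemma uf_disjoint (P Q : T -> Prop) :
  U P -> U Q -> (forall x, P x -> Q x -> False) -> False.
Proof.
  intros UP UQ HPQ.
  destruct (uf_nonempty U_ultra (uf_and U_ultra UP UQ)) as [x [Px Qx]].
  exact (HPQ x Px Qx).
Qed.

Lemma uf_forall_list (A : Type) (P : A -> T -> Prop) l :
  (forall a, In a l -> U (P a)) -> U (fun x => forall a, In a l -> P a x).
Proof.
  induction l as [|a l IH]; intro Hl.
  - eapply (uf_mono U_ultra); [|exact uf_full]; intros _ _ _ [].
  - eapply (uf_mono U_ultra); [|exact (uf_and U_ultra (Hl a (or_introl eq_refl))
                                         (IH (fun b Hb => Hl b (or_intror Hb))))].
    intros x [Ha Hrest] b [<-|Hb]; auto.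
Qed.
End UltrafilterFacts.

Section UltrafilterOrientation.
Variables (V : Type) (E : V -> V -> Prop) (k : nat) (U : vset V -> Prop).
Hypothesis E_sym : forall u v, E u v -> E v u.
Hypothesis U_ultra : ultrafilter U.
Hypothesis U_nonprincipal : forall S, finite_set S -> ~ U S.

Definition uf_orient (p : osep V) : Prop := in_Sk E k p /\ U (strict_side p).

Lemma uf_orient_orientation : orientation E k uf_orient.
Proof.
  split; [|split].
  - now intros p [].
  - intros p Hp.
    destruct (uf_dichotomy U_ultra (strict_side p)) as [H|H]; [now left|right].
    split; [now apply in_Sk_flip|].
    assert (Usep : U (fun v => ~ sinter (fst p) (snd p) v)).
    { destruct (uf_dichotomy U_ultra (sinter (fst p) (snd p))) as [Hs|Hs]; auto.
      exfalso; exact (U_nonprincipal (card_lt_finite (proj2 Hp)) Hs). }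
    eapply (uf_mono U_ultra); [|exact (uf_and U_ultra Usep H)].
    destruct Hp as [[Hcov _] _]; intros v; unfold strict_side, sinter; simpl.
    destruct (Hcov v); tauto.
  - intros p [_ H1] [_ H2]; exfalso.
    apply (uf_disjoint U_ultra H1 H2); unfold strict_side; simpl; tauto.
Qed.

Lemma uf_orient_consistent : consistent E k uf_orient.
Proof.
  intros [p [q [_ [_ [_ [[HA _] [_ [[_ H1] [_ H2]]]]]]]]].
  apply (uf_disjoint U_ultra H1 H2); unfold strict_side; simpl.
  intros v [Ap _] [_ nAq]; exact (nAq (HA v Ap)).
Qed.

Lemma uf_orient_no_finite_star (s : osep V -> Prop) :
  finite_set s -> finite_set (interior s) -> ~ (forall p, s p -> uf_orient p).
Proof.
  intros [ps Hps] Hint Hall; apply (U_nonprincipal Hint).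
  eapply (uf_mono U_ultra);
    [|apply (uf_forall_list U_ultra (P := fun p v => s p -> strict_side p v) (l := ps))].
  - intros v Hv p sp; exact (proj1 (Hv p (Hps p sp) sp)).
  - intros p _; destruct (classic (s p)) as [sp|nsp].
    + eapply (uf_mono U_ultra); [|exact (proj2 (Hall p sp))]; auto.
    + eapply (uf_mono U_ultra); [|exact (uf_full U_ultra)]; tauto.
Qed.

Lemma uf_orient_F_tangle (F : (osep V -> Prop) -> Prop) :
  (forall s, F s -> finite_set s /\ finite_set (interior s)) ->
  F_tangle E k F uf_orient.
Proof.
  intros HF; split; [exact uf_orient_orientation|split; [exact uf_orient_consistent|]].
  intros s Fs; exact (uf_orient_no_finite_star (proj1 (HF s Fs)) (proj2 (HF s Fs))).
Qed.
End UltrafilterOrientation.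

Section Family.
Variables (V J : Type) (Ind : J -> Prop) (K : J -> vset V).
Variables (E : V -> V -> Prop) (X : vset V).
Hypothesis K_disjoint : forall i j v, Ind i -> Ind j -> K i v -> K j v -> i = j.

Definition almost_all (T : vset V) : Prop :=
  exists l : list J, forall i, Ind i -> ~ In i l -> subset (K i) T.

Lemma almost_all_compl_finite (S : vset V) :
  finite_set S -> almost_all (fun v => ~ S v).
Proof.
  intros [xs Hxs].
  enough (H : almost_all (fun v => ~ In v xs)).
  { destruct H as [l Hl]; exists l; intros i Ii nIn v Kv Sv.
    exact (Hl i Ii nIn v Kv (Hxs v Sv)). }
  clear Hxs; induction xs as [|x xs [l Hl]].
  - exists nil; intros i _ _ v _ [].
  - destruct (classic (exists i, Ind i /\ K i x)) as [[i [Ii Kix]]|Hx].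
    + exists (i :: l); intros j Ij nIn v Kv [->|Hin].
      * apply nIn; left; symmetry; eauto.
      * exact (Hl j Ij (fun H => nIn (or_intror H)) v Kv Hin).
    + exists l; intros j Ij nIn v Kv [->|Hin]; eauto.
      exact (Hl j Ij nIn v Kv Hin).
Qed.

Hypothesis Ind_infinite : infinite_set Ind.
Hypothesis K_nonempty : forall i, Ind i -> exists v, K i v.

Lemma almost_all_nonempty (T : vset V) : almost_all T -> exists v, T v.
Proof.
  intros [l Hl]; destruct (classic (exists i, Ind i /\ ~ In i l)) as [[i [Ii nIn]]|Hno].
  - destruct (K_nonempty Ii) as [v Kv]; exists v; exact (Hl i Ii nIn v Kv).
  - exfalso; apply Ind_infinite; exists l; intros i Ii.
    apply NNPP; intro nIn; apply Hno; eauto.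
Qed.

Lemma almost_all_ultrafilter : exists U, ultrafilter U /\
  (forall T, almost_all T -> U T) /\ (forall S, finite_set S -> ~ U S).
Proof.
  destruct (@ultrafilter_extends V almost_all) as [U [HU HaU]].
  - exists nil; intros; intros v _; exact I.
  - intros P Q [l1 H1] [l2 H2]; exists (l1 ++ l2); intros i Ii nIn v Kv.
    split; [apply (H1 i)|apply (H2 i)]; auto; intro; apply nIn, in_or_app; auto.
  - intros P Q PQ [l Hl]; exists l; intros i Ii nIn v Kv; exact (PQ v (Hl i Ii nIn v Kv)).
  - exact almost_all_nonempty.
  - exists U; split; [exact HU|split; [exact HaU|]]; intros S HS US.
    apply (uf_disjoint HU US (HaU _ (almost_all_compl_finite HS))); auto.
Qed.

Hypothesis E_sym : forall u v, E u v -> E v u.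
Hypothesis K_separated : forall i j x y, Ind i -> Ind j -> K i x -> K j y ->
  reach E (fun v => ~ X v) x y -> i = j.

Lemma almost_all_compl_comp (D : vset V) :
  is_comp E (fun v => ~ X v) D -> almost_all (fun v => ~ D v).
Proof.
  intros CD; destruct (classic (exists i, Ind i /\ exists x, K i x /\ D x))
    as [[i [Ii [x [Kx Dx]]]]|Hno].
  - exists (i :: nil); intros j Ij nIn y Ky Dy; apply nIn; left.
    exact (K_separated Ii Ij Kx Ky (comp_reach E_sym CD Dx Dy)).
  - exists nil; intros j Ij _ y Ky Dy; apply Hno; eauto.
Qed.

Theorem nonprincipal_tangle_of_family (k : nat) (F : (osep V -> Prop) -> Prop)
  (sigma : osep V -> Prop) :
  (forall s, F s -> finite_set s /\ finite_set (interior s)) ->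
  (forall p, sigma p -> in_Sk E k p) ->
  (forall p, sigma p -> almost_all (strict_side p)) ->
  card_lt X k ->
  exists tau, F_tangle E k F tau /\ ~ principal E k tau /\
              (forall p, sigma p -> tau p).
Proof.
  intros HF Hsig_Sk Hsig HXk.
  destruct almost_all_ultrafilter as [U [HU [HaU HUfin]]].
  exists (uf_orient E k U); split; [|split].
  - exact (uf_orient_F_tangle k E_sym HU HUfin HF).
  - intro Hprincipal; destruct (Hprincipal X HXk) as [D [CD [_ UD]]]; simpl in UD.
    apply (uf_disjoint HU UD (HaU _ (almost_all_compl_comp CD))).
    intros v [_ nnDv] nDv; exact (nnDv nDv).
  - intros p sp; split; [exact (Hsig_Sk p sp)|exact (HaU _ (Hsig p sp))].
Qed.
End Family.

Section TorsoComponents.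
Variables (V : Type) (E : V -> V -> Prop) (sigma : osep V -> Prop) (X : vset V).
Hypothesis E_sym : forall u v, E u v -> E v u.
Hypothesis E_irr : forall v, ~ E v v.
Hypothesis sigma_star : is_star E sigma.

Let T := torso_adj E sigma.
Let S := fun v => interior sigma v /\ ~ X v.

Lemma torso_adj_sym u v : T u v -> T v u.
Proof.
  intros [iu [iv [neq H]]]; repeat split; auto.
  destruct H as [H|[p [sp [Hu Hv]]]]; [left; auto|right; exists p; auto].
Qed.

Lemma separator_in_torso_comp (i : vset V) p y z :
  is_comp T S i -> sigma p -> sinter (fst p) (snd p) y -> sinter (fst p) (snd p) z ->
  ~ X z -> i y -> i z.
Proof.
  intros Ci sp Hy Hz nXz iy; destruct (classic (y = z)) as [<-|nyz]; auto.
  assert (Hint : forall v, sinter (fst p) (snd p) v -> interior sigma v)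
    by (intro v; exact (star_separator_interior sigma_star sp)).
  apply (comp_closed Ci iy); [|split; auto].
  repeat split; auto; right; exists p; auto.
Qed.

(* A G-path avoiding X that leaves int(σ) enters some A \ B with (A,B) ∈ σ
   through A ∩ B, and can only return through A ∩ B, which is a clique of the
   torso: so it stays attached to the torso component it started from. *)
Definition attached (i : vset V) (w : V) : Prop :=
  i w \/ exists p, sigma p /\ strict_side (flip p) w /\
                   (forall z, sinter (fst p) (snd p) z -> ~ X z -> i z).

Lemma attached_step (i : vset V) b c :
  is_comp T S i -> attached i b -> E b c -> ~ X c -> attached i c.
Proof.
  intros Ci Hb Ebc nXc.
  assert (Hsep : forall p, sigma p -> is_sep E (fst p) (snd p))
    by (intros p sp; exact (proj1 (proj1 sigma_star p sp))).
  destruct Hb as [ib|[p [sp [[Ab nBb] Hp]]]].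
  - destruct (comp_sub Ci ib) as [intb nXb].
    destruct (classic (interior sigma c)) as [intc|nintc].
    + left; apply (comp_closed Ci ib); [|split; auto].
      split; [exact intb|split; [exact intc|split]].
      * intros ->; exact (E_irr Ebc).
      * left; exact Ebc.
    + destruct (not_all_ex_not _ _ nintc) as [p Hp].
      apply imply_to_and in Hp; destruct Hp as [sp nBc].
      assert (Ac : fst p c).
      { destruct (proj1 (Hsep p sp) c); tauto. }
      assert (Hsepb : sinter (fst p) (snd p) b)
        by (split; [exact (sep_edge_left (Hsep p sp) (E_sym Ebc) Ac nBc)|exact (intb p sp)]).
      right; exists p; repeat split; auto.
      intros z Hz nXz; exact (separator_in_torso_comp Ci sp Hsepb Hz nXz ib).
  - assert (Ac : fst p c) by exact (sep_edge_left (Hsep p sp) Ebc Ab nBb).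
    destruct (classic (snd p c)) as [Bc|nBc].
    + left; apply Hp; [split|]; auto.
    + right; exists p; repeat split; auto.
Qed.

Lemma torso_comp_path (i : vset V) x y :
  is_comp T S i -> i x -> reach E (fun v => ~ X v) x y -> interior sigma y -> i y.
Proof.
  intros Ci ix Rxy inty.
  assert (Hstep : forall b c, attached i b -> E b c -> ~ X c -> attached i c)
    by (intros b c; exact (attached_step Ci)).
  destruct (reach_invariant Hstep Rxy (or_introl ix)) as [iy|[p [sp [[_ nBy] _]]]]; auto.
  exfalso; exact (nBy (inty p sp)).
Qed.

Definition critical_comp (i : vset V) : Prop :=
  is_comp T S i /\ forall v, nbh T (interior sigma) i v <-> X v.

Lemma critical_comp_disjoint i j v :
  critical_comp i -> critical_comp j -> i v -> j v -> i = j.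
Proof. intros [Ci _] [Cj _]; exact (comp_eq torso_adj_sym Ci Cj). Qed.

Lemma critical_comp_separated i j x y : critical_comp i -> critical_comp j ->
  i x -> j y -> reach E (fun v => ~ X v) x y -> i = j.
Proof.
  intros Ii Ij ix jy Rxy; apply (critical_comp_disjoint (v := y) Ii Ij); auto.
  destruct Ii as [Ci _], Ij as [Cj _].
  exact (torso_comp_path Ci ix Rxy (proj1 (comp_sub Cj jy))).
Qed.

Lemma critical_comp_strict_side p :
  sigma p -> almost_all critical_comp (fun i => i) (strict_side p).
Proof.
  intros sp; destruct sigma_star as [Hfin _].
  destruct (almost_all_compl_finite critical_comp_disjoint (proj2 (Hfin p sp))) as [l Hl].
  exists l; intros i Ii nIn v iv.
  assert (Bv : snd p v) by exact (proj1 (comp_sub (proj1 Ii) iv) p sp).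
  split; [exact Bv|intro Av; exact (Hl i Ii nIn v iv (conj Av Bv))].
Qed.
End TorsoComponents.

Section SeparationsAtX.
Variables (V : Type) (E : V -> V -> Prop) (sigma : osep V -> Prop) (X : vset V).
Hypothesis sigma_star : is_star E sigma.

Definition sep_at (p : osep V) : Prop :=
  sigma p /\ forall v, sinter (fst p) (snd p) v <-> X v.

Lemma sep_at_disjoint p q v :
  sep_at p -> sep_at q -> strict_side (flip p) v -> strict_side (flip q) v -> p = q.
Proof. intros [sp _] [sq _]; exact (star_strict_sides_disjoint sigma_star sp sq). Qed.

Lemma sep_at_separated p q x y : sep_at p -> sep_at q ->
  strict_side (flip p) x -> strict_side (flip q) y ->
  reach E (fun v => ~ X v) x y -> p = q.
Proof.
  intros Ip Iq Hx Hy Rxy; apply (sep_at_disjoint (v := y) Ip Iq); auto.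
  destruct Ip as [sp HX].
  refine (strict_left_closed (proj1 (proj1 sigma_star p sp)) _ Rxy Hx).
  intros v nXv Hv; exact (nXv (proj1 (HX v) Hv)).
Qed.

Lemma sep_at_strict_side p :
  sigma p -> almost_all sep_at (fun q => strict_side (flip q)) (strict_side p).
Proof.
  intros sp; exists (p :: nil); intros q [sq _] nIn.
  apply (star_strict_side sigma_star sp sq); intros ->; apply nIn; now left.
Qed.
End SeparationsAtX.

Theorem lemma3p8 (V : Type) (E : V -> V -> Prop)
  (E_sym : forall u v, E u v -> E v u) (E_irr : forall v, ~ E v v)
  (k : nat) (F : (osep V -> Prop) -> Prop)
  (HF : forall s, F s ->
     is_star E s /\ finite_set s /\ (forall p, s p -> in_Sk E k p) /\
     finite_set (interior s))
  (sigma : osep V -> Prop)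
  (Hsig_Sk : forall p, sigma p -> in_Sk E k p)
  (Hsig_star : is_star E sigma)
  (Hsig_tight : forall p, sigma p -> left_tight E p)
  (X : vset V) (HXint : subset X (interior sigma)) (HXk : card_lt X k)
  (Hcase : critical (torso_adj E sigma) (interior sigma) X \/
           infinite_set (fun p => sigma p /\
                           forall v, sinter (fst p) (snd p) v <-> X v)) :
  exists tau, F_tangle E k F tau /\ ~ principal E k tau /\
              (forall p, sigma p -> tau p).
Proof.
  assert (HF' : forall s, F s -> finite_set s /\ finite_set (interior s))
    by (intros s Fs; destruct (HF s Fs) as [_ [? [_ ?]]]; auto).
  destruct Hcase as [[_ [_ Hinf]] | Hinf].
  - exact (nonprincipal_tangle_of_family (K := fun i => i)
             (critical_comp_disjoint E_sym) Hinf (fun i Ii => comp_nonempty (proj1 Ii))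
             E_sym (critical_comp_separated E_sym E_irr Hsig_star)
             HF' Hsig_Sk (critical_comp_strict_side X E_sym Hsig_star) HXk).
  - exact (nonprincipal_tangle_of_family (K := fun p => strict_side (flip p))
             (sep_at_disjoint Hsig_star) Hinf
             (fun p Ip => left_tight_nonempty (Hsig_tight p (proj1 Ip)))
             E_sym (sep_at_separated Hsig_star)
             HF' Hsig_Sk (sep_at_strict_side X Hsig_star) HXk).
Qed.
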